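(* Let $\mathbf u$ be an infinite word whose language is closed under reversal, and suppose there exists an integer $H$ such that for every factor $f$ of $\mathbf u$ with $|f|\ge H$ the longest palindromic suffix of $f$ occurs exactly once in $f$. Then $$2+\mathcal C(n+1)-\mathcal C(n)=\mathcal P(n+1)+\mathcal P(n)\quad\text{for every } n\ge H.$$
   Context: For a finite word $w$, $\overline{w}$ denotes its reversal; $w$ is a palindrome if $w=\overline w$. The language of $\mathbf u$ is closed under reversal if $\overline w$ is a factor of $\mathbf u$ whenever $w$ is. $\mathcal C(n)$ is the number of distinct factors of $\mathbf u$ of length $n$ and $\mathcal P(n)$ the number of distinct palindromic factors of $\mathbf u$ of length $n$. *)

From mathcomp Require Import all_boot all_order all_algebra.
From mathcomp Require Import boolp.
Set Implicit Arguments. Unset Strict Implicit. Unset Printing Implicit Defensive.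

Definition palindrome (A : eqType) (w : seq A) : bool := rev w == w.

Definition factor (A : Type) (u : nat -> A) (w : seq A) : Prop :=
  exists i : nat, w = mkseq (fun k => u (i + k)) (size w).

Definition closed_under_reversal (A : Type) (u : nat -> A) : Prop :=
  forall w : seq A, factor u w -> factor u (rev w).

(* longest palindromic suffix: drop the least number k of letters such that
   the remaining suffix is a palindrome (k = size f always works: empty word) *)
Definition lps (A : eqType) (f : seq A) : seq A :=
  drop (find (fun k => palindrome (drop k f)) (iota 0 (size f).+1)) f.

Definition occ (A : eqType) (s f : seq A) : nat :=
  if size s <= size f then
    count (fun i => take (size s) (drop i f) == s) (iota 0 (size f - size s).+1)
  else 0.

Definition C (A : finType) (u : nat -> A) (n : nat) : nat :=
  #|[set w : n.-tuple A | `[< factor u (tval w) >]]|.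

Definition P (A : finType) (u : nat -> A) (n : nat) : nat :=
  #|[set w : n.-tuple A | `[< factor u (tval w) >] && palindrome (tval w)]|.

From mathcomp Require Import all_boot all_order all_algebra.
From mathcomp Require Import boolp zify.
Set Implicit Arguments. Unset Strict Implicit. Unset Printing Implicit Defensive.

(* Read u letter by letter and follow, along the prefixes w of u, the sets of
   factors of w of lengths n and n+1 taken up to reversal. Appending a letter
   a can only add the suffixes v and e of wa of lengths n and n+1 (with their
   reversals). If v is new then so is e, and e is no palindrome, since
   otherwise rev v is a prefix of e and occurs in w: both sides of the
   identity grow by 2. If v is old but e is new, then e is a palindrome, for
   it has to be the unioccurrent longest palindromic suffix of wa: both sides
   grow by 1. Once the prefix contains every factor of length n and n+1,
   closure under reversal turns these counts into C and P. *)

Section FiniteWords.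
Variable A : eqType.
Implicit Types (f w p x s t : seq A) (a : A).

Lemma palindrome_rev w : palindrome w -> rev w = w.
Proof. by move/eqP. Qed.

Lemma palindrome_lps f : palindrome (lps f).
Proof.
rewrite /lps; set k := find _ _.
have has_pal : has (fun k => palindrome (drop k f)) (iota 0 (size f).+1).
  apply/hasP; exists (size f); first by rewrite mem_iota add0n ltnS leqnn.
  by rewrite drop_size.
have lt_k : k < (size f).+1 by rewrite -[X in _ < X](size_iota 0) -has_find.
by have := nth_find 0 has_pal; rewrite -/k nth_iota.
Qed.

Lemma suffix_lps f : suffix (lps f) f.
Proof. exact: suffix_drop. Qed.

Lemma suffix_behead w : suffix (behead w) w.
Proof. by rewrite -drop1 suffix_drop. Qed.

Lemma suffix_suffixes s t w :
  suffix s w -> suffix t w -> size s <= size t -> suffix s t.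
Proof.
rewrite !suffixE => /eqP <- /eqP <-; rewrite !size_drop => le_st.
by rewrite drop_drop; apply/eqP; congr drop; lia.
Qed.

Lemma suffix_inj s t w : suffix s w -> suffix t w -> size s = size t -> s = t.
Proof.
move=> ss st eq_st; have := suffix_suffixes ss st (eq_leq eq_st).
by rewrite suffixE eq_st subnn drop0 => /eqP.
Qed.

Lemma infix_size_eq x w : infix x w -> size x = size w -> x = w.
Proof.
move=> /infixW /size_subseq_leqif le_xw eq_xw.
by apply/eqP; rewrite -le_xw.2 eq_xw.
Qed.

Lemma infix_prefix_suffix_rcons x p w a :
  prefix x p -> suffix p (rcons w a) -> size x < size p -> infix x w.
Proof.
case/prefixP=> t -> /suffixP [s]; case/lastP: t => [|t b].
  by rewrite cats0 ltnn.
rewrite -!rcons_cat => /rcons_inj [-> _] _; exact: infix_infix.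
Qed.

Lemma occ_gt1 p w a : infix p w -> suffix p (rcons w a) -> 1 < occ p (rcons w a).
Proof.
case/infixP=> [s1 [s2 def_w]] /suffixP [s def_w'].
have size_w' : size (rcons w a) = size s1 + size p + (size s2).+1.
  by rewrite def_w size_rcons !size_cat; lia.
have lt_s1s : size s1 < size s.
  by move: size_w'; rewrite def_w' size_cat; lia.
rewrite /occ size_w' ifT -?size_filter; last by lia.
apply: (@uniq_leq_size _ [:: size s1; size s]).
  by rewrite /= inE andbT neq_ltn lt_s1s.
move=> i; rewrite !inE mem_filter mem_iota => /orP [] /eqP ->.
  by rewrite def_w -cats1 -!catA drop_size_cat // take_size_cat // eqxx; lia.
by rewrite def_w' drop_size_cat // take_size eqxx; move: size_w'; rewrite def_w' size_cat; lia.
Qed.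

Lemma palindrome_suffix_rev_behead e w a :
  palindrome e -> suffix e (rcons w a) -> 0 < size e -> infix (rev (behead e)) w.
Proof.
move=> pe se e_gt0; apply: (infix_prefix_suffix_rcons _ se).
  by rewrite -{2}(palindrome_rev pe) prefix_rev suffix_behead.
by rewrite size_rev size_behead; lia.
Qed.

Lemma palindrome_new_extension w a e :
  occ (lps (rcons w a)) (rcons w a) = 1 ->
  suffix e (rcons w a) ->
  infix (behead e) w || infix (rev (behead e)) w ->
  ~~ (infix e w || infix (rev e) w) ->
  palindrome e.
Proof.
set w' := rcons w a; set p := lps w' => occ1 se old_v new_e.
(* A shorter p would be a suffix of behead e, hence occur in w; a longer one
   would start with rev e. *)
have sp : suffix p w' := suffix_lps w'.
have pp : palindrome p := palindrome_lps w'.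
case: (ltngtP (size p) (size e)) => [lt_pe|lt_ep|eq_pe].
- have sp_v : suffix p (behead e).
    apply: suffix_suffixes sp (suffix_trans (suffix_behead e) se) _.
    by rewrite size_behead; lia.
  have p_in_w : infix p w.
    have p_in_v : infix p (behead e) := suffixW sp_v.
    case/orP: old_v => hv; apply: infix_trans hv => //.
    by rewrite -(palindrome_rev pp) infix_rev.
  by have := occ_gt1 p_in_w sp; rewrite occ1.
- have se_p : suffix e p := suffix_suffixes se sp (ltnW lt_ep).
  have : infix (rev e) w.
    apply: infix_prefix_suffix_rcons sp _; last by rewrite size_rev.
    by rewrite prefix_revLR (palindrome_rev pp).
  by move: new_e; rewrite negb_or => /andP [_ /negPf ->].
- by rewrite -(suffix_inj sp se eq_pe).
Qed.

End FiniteWords.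

Section FactorSets.
Variable A : finType.
Implicit Types (w : seq A) (a : A).

Definition palindromes m : {set m.-tuple A} := [set x : m.-tuple A | palindrome x].

Definition sym_factors m w : {set m.-tuple A} :=
  [set x : m.-tuple A | infix x w || infix (rev x) w].

Lemma rev_tupleK m : involutive (@rev_tuple m A).
Proof. by move=> x; apply: val_inj; rewrite /= revK. Qed.

Lemma palindrome_tupleE m (x : m.-tuple A) : palindrome x = (rev_tuple x == x).
Proof. by rewrite -val_eqE. Qed.

Lemma sym_factors_rev m w (x : m.-tuple A) :
  (rev_tuple x \in sym_factors m w) = (x \in sym_factors m w).
Proof. by rewrite !inE /= revK orbC. Qed.

Lemma sym_factors_behead m w (x : m.+1.-tuple A) :
  x \in sym_factors m.+1 w -> behead_tuple x \in sym_factors m w.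
Proof.
rewrite !inE /= => /orP [] hx; apply/orP; [left | right]; apply: infix_trans hx.
  exact: suffixW (suffix_behead x).
by apply: prefixW; rewrite prefix_rev suffix_behead.
Qed.

Lemma sym_factors_rcons m w a (s : m.-tuple A) :
  suffix s (rcons w a) ->
  sym_factors m (rcons w a) = sym_factors m w :|: [set s; rev_tuple s].
Proof.
move=> ss; apply/setP=> x; rewrite !inE !infix_rconsl.
have suffix_eq (y : m.-tuple A) : (y == s) = suffix y (rcons w a).
  apply/eqP/idP => [-> // | sy]; apply: val_inj.
  by apply: suffix_inj sy ss _; rewrite !size_tuple.
rewrite suffix_eq -(can_eq (@rev_tupleK m)) rev_tupleK suffix_eq /=.
by case: (suffix x _); case: (suffix (rev x) _); rewrite ?orbT ?orbF.
Qed.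

Section RevPairs.
Variable m : nat.
Implicit Types (S : {set m.-tuple A}) (x : m.-tuple A).

Lemma setU_rev_pair_id S x :
  x \in S -> rev_tuple x \in S -> S :|: [set x; rev_tuple x] = S.
Proof. by move=> Sx Srx; apply/setUidPl/subsetP => y; rewrite !inE => /orP [] /eqP ->. Qed.

Lemma disjoint_rev_pair S x :
  x \notin S -> rev_tuple x \notin S -> S :&: [set x; rev_tuple x] = set0.
Proof.
move=> Sx Srx; apply/setP => y; rewrite !inE.
case: (eqVneq y x) => [-> | _]; first by rewrite (negPf Sx).
by case: (eqVneq y (rev_tuple x)) => [-> | _]; rewrite ?(negPf Srx) ?andbF.
Qed.

Lemma card_rev_pair x : #|[set x; rev_tuple x]| + palindrome x = 2.
Proof. by rewrite cards2 palindrome_tupleE eq_sym; case: eqP. Qed.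

Lemma card_rev_pair_palindromes x :
  #|[set x; rev_tuple x] :&: palindromes m| = palindrome x.
Proof.
have pal_rev : palindrome (rev_tuple x) = palindrome x.
  by rewrite !palindrome_tupleE rev_tupleK eq_sym.
case: (boolP (palindrome x)) => px.
  have ->: rev_tuple x = x by apply/eqP; rewrite -palindrome_tupleE.
  by rewrite setUid (setIidPl _) ?cards1 // sub1set inE.
apply/eqP; rewrite cards_eq0; apply/eqP/setP => y; rewrite !inE.
case: (eqVneq y x) => [-> | _]; first by rewrite (negPf px) andbF.
by case: (eqVneq y (rev_tuple x)) => [-> | _]; rewrite ?pal_rev ?(negPf px) ?andbF.
Qed.

Lemma card_setU_rev_pair S x : x \notin S -> rev_tuple x \notin S ->
  #|S :|: [set x; rev_tuple x]| + palindrome x = #|S| + 2.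
Proof.
move=> Sx Srx; have := cardsUI S [set x; rev_tuple x].
rewrite disjoint_rev_pair // cards0 addn0; have := card_rev_pair x.
by move=> <- ->; rewrite addnA.
Qed.

Lemma card_palindromes_setU_rev_pair S x : x \notin S -> rev_tuple x \notin S ->
  #|(S :|: [set x; rev_tuple x]) :&: palindromes m| = #|S :&: palindromes m| + palindrome x.
Proof.
move=> Sx Srx; rewrite setIUl -card_rev_pair_palindromes cardsU.
suff -> : S :&: palindromes m :&: ([set x; rev_tuple x] :&: palindromes m) = set0.
  by rewrite cards0 subn0.
by rewrite setIACA setIid disjoint_rev_pair ?set0I.
Qed.

End RevPairs.

(* Once w contains all factors of length n and n+1 of a word closed under
   reversal, this reads 2 + C(n+1) = P(n+1) + P(n) + C(n). *)
Definition complexity_balance n w :=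
  2 + #|sym_factors n.+1 w| =
  #|sym_factors n.+1 w :&: palindromes n.+1| + #|sym_factors n w :&: palindromes n|
  + #|sym_factors n w|.

Lemma sym_factors_small m w : size w < m -> sym_factors m w = set0.
Proof.
move=> lt_wm; apply/setP => x; rewrite !inE.
by apply/negP => /orP [] /size_infix; rewrite ?size_rev size_tuple leqNgt lt_wm.
Qed.

Lemma sym_factors_full w :
  sym_factors (size w) w = [set in_tuple w; rev_tuple (in_tuple w)].
Proof.
apply/setP => x; rewrite !inE -!val_eqE /=.
have infix_full y : size y = size w -> infix y w = (y == w).
  move=> size_y; apply/idP/eqP => [/infix_size_eq -> // | ->]; exact: infix_refl.
by rewrite -(can2_eq revK revK) !infix_full ?size_rev ?size_tuple.
Qed.

Lemma complexity_balance_size n w : size w = n -> complexity_balance n w.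
Proof.
move=> <-; rewrite /complexity_balance sym_factors_small // set0I cards0.
rewrite sym_factors_full card_rev_pair_palindromes -(card_rev_pair (in_tuple w)).
by rewrite addn0 add0n addnC.
Qed.

Lemma exists_suffix_tuple m w : m <= size w -> exists x : m.-tuple A, suffix x w.
Proof.
move=> le_mw; have size_x : size (drop (size w - m) w) == m by rewrite size_drop; lia.
by exists (Tuple size_x); apply: suffix_drop.
Qed.

Lemma complexity_balance_rcons n w a :
  n <= size w -> occ (lps (rcons w a)) (rcons w a) = 1 ->
  complexity_balance n w -> complexity_balance n (rcons w a).
Proof.
move=> le_nw occ1.
have [e se] : exists e : n.+1.-tuple A, suffix e (rcons w a).
  by apply: exists_suffix_tuple; rewrite size_rcons.
pose v : n.-tuple A := behead_tuple e.
have sv : suffix v (rcons w a) := suffix_trans (suffix_behead e) se.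
rewrite /complexity_balance (sym_factors_rcons se) (sym_factors_rcons sv).
have new_rev m (x : m.-tuple A) :
    x \notin sym_factors m w -> rev_tuple x \notin sym_factors m w.
  by rewrite sym_factors_rev.
case: (boolP (v \in sym_factors n w)) => old_v.
  rewrite (setU_rev_pair_id old_v); last by rewrite sym_factors_rev.
  case: (boolP (e \in sym_factors n.+1 w)) => old_e.
    by rewrite (setU_rev_pair_id old_e) ?sym_factors_rev.
  have pe : palindrome e.
    by apply: palindrome_new_extension occ1 se _ _; [move: old_v | move: old_e]; rewrite inE.
  have := card_setU_rev_pair old_e (new_rev _ _ old_e).
  rewrite card_palindromes_setU_rev_pair ?new_rev // pe; lia.
have new_e : e \notin sym_factors n.+1 w by apply: contra old_v; apply: sym_factors_behead.
have npe : ~~ palindrome e.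
  apply: contra old_v => pe; rewrite inE; apply/orP; right.
  by apply: palindrome_suffix_rev_behead pe se _; rewrite size_tuple.
have := card_setU_rev_pair new_e (new_rev _ _ new_e).
have := card_setU_rev_pair old_v (new_rev _ _ old_v).
rewrite !card_palindromes_setU_rev_pair ?new_rev // (negPf npe); lia.
Qed.

End FactorSets.

Arguments palindromes {A} m.

Section InfiniteWords.
Variables (A : finType) (u : nat -> A).

Lemma prefix_mkseq N M : N <= M -> prefix (mkseq u N) (mkseq u M).
Proof. by move=> le_NM; rewrite /mkseq -(subnKC le_NM) iotaD map_cat prefix_prefix. Qed.

Lemma factor_mkseq N : factor u (mkseq u N).
Proof. by exists 0; rewrite size_mkseq. Qed.

Lemma factor_infix_mkseq w : factor u w <-> exists N, infix w (mkseq u N).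
Proof.
split=> [[i def_w] | [N /infixP [s [s' def_u]]]].
  have shift : [seq u j | j <- iota i (size w)] = mkseq (fun k => u (i + k)) (size w).
    by rewrite /mkseq -[in LHS](addn0 i) iotaDl -map_comp.
  exists (i + size w); rewrite {1}def_w /mkseq iotaD map_cat add0n shift.
  exact: suffix_infix.
exists (size s); apply: (@eq_from_nth _ (u 0)); rewrite ?size_mkseq // => k lt_kw.
have lt_sk : size s + k < N.
  have := congr1 size def_u; rewrite size_mkseq !size_cat => ->.
  by rewrite ltn_add2l ltn_addr.
rewrite nth_mkseq // -(nth_mkseq (u 0) u lt_sk) def_u.
by rewrite nth_cat ltnNge leq_addr /= addKn nth_cat lt_kw.
Qed.

Lemma factors_in_prefix (s : seq (seq A)) :
  {in s, forall w, factor u w} -> exists N, {in s, forall w, infix w (mkseq u N)}.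
Proof.
elim: s => [|w s IH] fs; first by exists 0.
have [|N fN] := IH; first by move=> x sx; apply: fs; rewrite inE sx orbT.
have [M /infix_trans wM] := (factor_infix_mkseq w).1 (fs w (mem_head w s)).
exists (maxn N M) => x; rewrite inE => /orP [/eqP -> | sx].
  by apply: wM; apply: prefixW; apply: prefix_mkseq; rewrite leq_maxr.
by apply: infix_trans (fN x sx) _; apply: prefixW; apply: prefix_mkseq; rewrite leq_maxl.
Qed.

Lemma sym_factors_mkseq m : closed_under_reversal u ->
  exists N0, forall N, N0 <= N ->
    sym_factors m (mkseq u N) = [set x : m.-tuple A | `[< factor u x >]].
Proof.
move=> closed_u; set F := [set x : m.-tuple A | _].
have [|N0 fN0] := @factors_in_prefix [seq val x | x <- enum F].
  by move=> w /mapP [x]; rewrite mem_enum inE => /asboolP fx ->.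
exists N0 => N le_N0N; apply/setP => x; rewrite !inE; apply/idP/asboolP.
  case/orP => hx; first by apply/factor_infix_mkseq; exists N.
  by rewrite -(revK x); apply: closed_u; apply/factor_infix_mkseq; exists N.
move=> fx; apply/orP; left; apply: infix_trans (prefixW (prefix_mkseq le_N0N)).
by apply: fN0; apply: map_f; rewrite mem_enum inE; apply/asboolP.
Qed.

Lemma complexity_balance_mkseq H n :
  (forall N, H <= N -> occ (lps (mkseq u N)) (mkseq u N) = 1) -> H <= n ->
  forall N, n <= N -> complexity_balance n (mkseq u N).
Proof.
move=> occ1 le_Hn; elim=> [|N IH] le_nN.
  by apply: complexity_balance_size; rewrite size_mkseq; lia.
have [lt_nN | ->] : n < N.+1 \/ n = N.+1 by lia.
  rewrite mkseqS; apply: complexity_balance_rcons (IH _).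
  - by rewrite size_mkseq; lia.
  - by rewrite -mkseqS occ1 //; lia.
  - lia.
by apply: complexity_balance_size; rewrite size_mkseq.
Qed.

End InfiniteWords.

Import GRing.Theory.
Local Open Scope ring_scope.

Theorem proposition4p5 (A : finType) (u : nat -> A) (H : nat) :
  closed_under_reversal u ->
  (forall f : seq A, factor u f -> (H <= size f)%N -> occ (lps f) f = 1%N) ->
  forall n : nat, (H <= n)%N ->
    2 + (C u n.+1)%:Z - (C u n)%:Z = (P u n.+1)%:Z + (P u n)%:Z.
Proof.
move=> closed_u occ1 n le_Hn.
have [N0 F0] := sym_factors_mkseq n closed_u.
have [N1 F1] := sym_factors_mkseq n.+1 closed_u.
have occ1_mkseq N : (H <= N)%N -> occ (lps (mkseq u N)) (mkseq u N) = 1%N.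
  by move=> le_HN; apply: occ1; [exact: factor_mkseq | rewrite size_mkseq].
pose N := n + maxn N0 N1.
have [le_nN le_N0N le_N1N] : [/\ (n <= N)%N, (N0 <= N)%N & (N1 <= N)%N].
  by rewrite /N; split; lia.
have := complexity_balance_mkseq occ1_mkseq le_Hn le_nN.
rewrite /complexity_balance F0 // F1 //.
have P_card m : P u m = #|[set x : m.-tuple A | `[< factor u x >]] :&: palindromes m|.
  by apply: eq_card => x; rewrite !inE.
rewrite -/(C u n) -/(C u n.+1) -!P_card => /(congr1 Posz).
rewrite !PoszD; lia.
Qed.
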